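(* Let $N\ge1$, $\alpha>0$, $a_k,w_k\in\mathbb{C}$ with $a_k\neq0$ for $k=1,\dots,N$ and $\Re w_k\neq\Re w_l$ for $k\neq l$. For $k=1,\dots,N$, $s=0,\dots,N-1$ let $$A_{k,s}=(-1)^s\sum_{\substack{j_1<\dots<j_s\\ j_l\neq k}} e^{\frac{2\pi}{\alpha}(w_{j_1}+\dots+w_{j_s})},\qquad m_s(\xi)=\sum_{k=1}^N a_kA_{k,s}e^{2\pi\xi w_k}.$$ For $\theta\in\mathbb{R}$ let $B(\theta,N)$ be the $N\times N$ matrix with entries $B_{r,s}=m_{s}(\theta-r)$, $r=0,\dots,N-1$, $s=0,\dots,N-1$. Then $\det B(\theta,N)\neq0$ for every $\theta\in\mathbb{R}$.
   Context: In the definition of $A_{k,s}$ the sum is over all $s$-element subsets $\{j_1,\dots,j_s\}$ of $\{1,\dots,N\}\setminus\{k\}$, with $A_{k,0}=1$. *)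

From mathcomp Require Import all_boot all_order all_algebra.
From mathcomp Require Import reals sequences exp trigo.
From mathcomp Require Import complex.
Set Implicit Arguments. Unset Strict Implicit. Unset Printing Implicit Defensive.
Import Order.TTheory GRing.Theory Num.Theory.
Local Open Scope ring_scope.
Local Open Scope complex_scope.

Definition cexp (R : realType) (z : R[i]) : R[i] :=
  (expR (complex.Re z))%:C * (cos (complex.Im z) +i* sin (complex.Im z)).

Definition Acoef (R : realType) (N : nat) (alpha : R) (w : 'I_N -> R[i])
    (k : 'I_N) (s : nat) : R[i] :=
  (-1) ^+ s *
  \sum_(S : {set 'I_N} | (k \notin S) && (#|S| == s))
     cexp (((2 * pi / alpha)%R)%:C * \sum_(j in S) w j).

Definition mfun (R : realType) (N : nat) (alpha : R) (a w : 'I_N -> R[i])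
    (s : nat) (xi : R) : R[i] :=
  \sum_(k < N) a k * Acoef alpha w k s * cexp (((2 * pi * xi)%R)%:C * w k).

Definition Bmat (R : realType) (N : nat) (alpha : R) (a w : 'I_N -> R[i])
    (theta : R) : 'M[R[i]]_N :=
  \matrix_(r < N, s < N) mfun alpha a w s (theta - (r : nat)%:R).

From mathcomp Require Import all_boot all_order all_algebra.
From mathcomp Require Import reals sequences exp trigo.
From mathcomp Require Import complex.
From mathcomp Require Import ring.

(* B(theta) = V D A with V the Vandermonde matrix of the numbers
   exp(-2 pi w_k), D = diag(exp(2 pi theta w_k)) and A = (a_k A_{k,s}).  Since
   sum_s A_{k,s} y^s = prod_{j <> k} (1 - u_j y) with u_j = exp(2 pi w_j / alpha),
   A times the Vandermonde matrix of the u_l^-1 is diagonal with entries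
   a_k prod_{j <> k} (1 - u_j / u_k).  Everything is invertible because
   |exp z| = exp(Re z) and the Re w_k are distinct. *)
Import Order.TTheory GRing.Theory Num.Theory.
Local Open Scope ring_scope.
Local Open Scope complex_scope.

Section ElementarySymmetric.
Context {R : comPzRingType} {I : finType}.

Definition elem_symm (A : {set I}) (x : I -> R) (s : nat) : R :=
  \sum_(S : {set I} | (S \subset A) && (#|S| == s)) \prod_(j in S) x j.

Lemma prod_1_sub_subsets (A : {set I}) (x : I -> R) (y : R) :
  \prod_(j in A) (1 - x j * y) =
  \sum_(S : {set I} | S \subset A) (-1) ^+ #|S| * \prod_(j in S) x j * y ^+ #|S|.
Proof.
pose F j := if j \in A then - (x j * y) else 0.
have -> : \prod_(j in A) (1 - x j * y) = \prod_j (F j + 1).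
  rewrite big_mkcond; apply: eq_bigr => j _.
  by rewrite /F; case: ifP => _; rewrite ?add0r // addrC.
rewrite bigA_distr (bigID (fun S : {set I} => S \subset A)) /=.
rewrite [X in _ + X]big1 ?addr0 => [|S /subsetPn[i iS iA]]; last first.
  by rewrite (bigD1 i) //= iS /F (negbTE iA) mul0r.
apply: eq_bigr => S sSA; rewrite -big_mkcond /=.
rewrite (eq_bigr (fun j => - (x j * y))) => [|j jS]; last by rewrite /F (subsetP sSA).
by rewrite prodrN big_split /= prodr_const mulrA.
Qed.

Lemma prod_1_sub_elem_symm n (A : {set I}) (x : I -> R) (y : R) :
  (#|A| < n)%N ->
  \prod_(j in A) (1 - x j * y) = \sum_(s < n) (-1) ^+ s * elem_symm A x s * y ^+ s.
Proof.
move=> An; rewrite prod_1_sub_subsets.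
under [RHS]eq_bigr => s _ do rewrite /elem_symm mulr_sumr mulr_suml.
rewrite (exchange_big_dep (fun S : {set I} => S \subset A)) /= => [|s S _ /andP[]//].
apply: eq_bigr => S sSA.
have cardS : (#|S| < n)%N := leq_ltn_trans (subset_leq_card sSA) An.
by rewrite (big_pred1 (Ordinal cardS)) // => s; rewrite sSA eq_sym.
Qed.

End ElementarySymmetric.

Lemma det_Vandermonde_neq0 (R : idomainType) n (f : 'I_n -> R) :
  injective f -> \det (Vandermonde n (\row_i f i)) != 0.
Proof.
move=> f_inj; rewrite det_Vandermonde.
apply/prodf_neq0 => i _; apply/prodf_neq0 => j ij.
by rewrite !mxE subr_eq0 (inj_eq f_inj) -val_eqE gtn_eqF.
Qed.

Section ComplexExponential.
Context {R : realType}.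
Implicit Types x y : R[i].

Lemma cexp0 : cexp (0 : R[i]) = 1.
Proof. by rewrite /cexp /= expR0 cos0 sin0 mul1r. Qed.

Lemma cexpD x y : cexp (x + y) = cexp x * cexp y.
Proof.
case: x y => [a b] [c d]; rewrite /cexp /= expRD cosD sinD.
by apply/eqP; rewrite eq_complex /=; apply/andP; split; apply/eqP; ring.
Qed.

Lemma cexpMn x n : cexp (x *+ n) = cexp x ^+ n.
Proof. by elim: n => [|n IH]; rewrite ?cexp0 // mulrS cexpD IH exprS. Qed.

Lemma cexp_sum (I : finType) (P : pred I) (F : I -> R[i]) :
  cexp (\sum_(i | P i) F i) = \prod_(i | P i) cexp (F i).
Proof. exact: (big_morph _ cexpD cexp0). Qed.

Lemma normr_cexp x : `|cexp x| = (expR (complex.Re x))%:C.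
Proof.
case: x => a b; rewrite normc_def /cexp /=.
have -> : (expR a * cos b - 0 * sin b) ^+ 2 + (expR a * sin b + 0 * cos b) ^+ 2
          = expR a ^+ 2 * (cos b ^+ 2 + sin b ^+ 2) by ring.
by rewrite cos2Dsin2 mulr1 sqrtr_sqr ger0_norm // ltW // expR_gt0.
Qed.

Lemma cexp_neq0 x : cexp x != 0.
Proof.
rewrite -normr_eq0 normr_cexp; apply: contraTneq (expR_gt0 (complex.Re x)).
by move=> /(congr1 (@complex.Re R)) /= ->; rewrite ltxx.
Qed.

Lemma eq_cexp_Re x y : cexp x = cexp y -> complex.Re x = complex.Re y.
Proof.
move=> exy; apply: expR_inj.
by have := congr1 (@complex.Re R) (normr_cexp x); rewrite exy normr_cexp.
Qed.

Lemma eq_cexp_scale_Re {r : R} {x y} :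
  r != 0 -> cexp (r%:C * x) = cexp (r%:C * y) -> complex.Re x = complex.Re y.
Proof.
case: x y => [a b] [c d] r0 /eq_cexp_Re /=.
by rewrite !mul0r !subr0 => /(mulfI r0).
Qed.

End ComplexExponential.

Section CoefficientMatrix.
Variables (R : realType) (N : nat) (alpha : R) (a w : 'I_N -> R[i]).
Hypothesis w_Re_inj : forall k l, k != l -> complex.Re (w k) != complex.Re (w l).

Let u j := cexp ((2 * pi / alpha)%:C * w j).

Lemma cexp_scale_w_inj {r : R} : r != 0 -> injective (fun k => cexp (r%:C * w k)).
Proof.
move=> r0 k l /(eq_cexp_scale_Re r0) /eqP Re_kl.
by apply/eqP; apply: contraLR Re_kl; apply: w_Re_inj.
Qed.

Lemma Acoef_elem_symm k s :
  Acoef alpha w k s = (-1) ^+ s * elem_symm [set~ k] u s.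
Proof.
rewrite /Acoef /elem_symm; congr (_ * _); apply: eq_big => [S|S _].
  by rewrite subsetC sub1set inE.
by rewrite mulr_sumr cexp_sum.
Qed.

Lemma Acoef_genfun k y :
  \sum_(s < N) Acoef alpha w k s * y ^+ s = \prod_(j in [set~ k]) (1 - u j * y).
Proof.
have N_gt0 : (0 < N)%N := leq_ltn_trans (leq0n k) (ltn_ord k).
rewrite (prod_1_sub_elem_symm N); last by rewrite cardsC1 card_ord ltn_predL.
by apply: eq_bigr => s _; rewrite Acoef_elem_symm.
Qed.

Definition Amat : 'M[R[i]]_N := \matrix_(k, s) (a k * Acoef alpha w k s).

Lemma mul_Amat_Vandermonde :
  Amat *m Vandermonde N (\row_l (u l)^-1) =
  diag_mx (\row_k (a k * \prod_(j in [set~ k]) (1 - u j / u k))).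
Proof.
apply/matrixP => k l; rewrite !mxE.
rewrite (eq_bigr (fun s : 'I_N => a k * (Acoef alpha w k s * (u l)^-1 ^+ s))) => [|s _];
  last by rewrite !mxE mulrA.
rewrite -big_distrr /= Acoef_genfun.
have [<-|nkl] := eqVneq k l; first by rewrite mulr1n.
by rewrite (bigD1 l) ?inE 1?eq_sym //= mulfV ?cexp_neq0 // subrr mul0r mulr0.
Qed.

Lemma det_Amat_neq0 : 0 < alpha -> (forall k, a k != 0) -> \det Amat != 0.
Proof.
move=> alpha_gt0 a_neq0.
have c_neq0 : 2 * pi / alpha != 0 by rewrite gt_eqF // divr_gt0 // mulr_gt0 // pi_gt0.
have : \det (Amat *m Vandermonde N (\row_l (u l)^-1)) != 0.
  rewrite mul_Amat_Vandermonde det_diag; apply/prodf_neq0 => k _.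
  rewrite mxE mulf_neq0 //; apply/prodf_neq0 => j; rewrite !inE => jk.
  rewrite subr_eq0 eq_sym; apply: contra jk => /eqP /divr1_eq.
  by move/(cexp_scale_w_inj c_neq0) ->.
by rewrite det_mulmx mulf_eq0 negb_or => /andP[].
Qed.

Lemma Bmat_factor theta :
  Bmat alpha a w theta =
  Vandermonde N (\row_k cexp ((- (2 * pi))%:C * w k))
  *m diag_mx (\row_k cexp ((2 * pi * theta)%:C * w k)) *m Amat.
Proof.
apply/matrixP => r s; rewrite !mxE /mfun; apply: eq_bigr => k _.
rewrite mul_mx_diag !mxE -cexpMn mulrC -cexpD; congr (cexp _ * _).
by rewrite !rmorphM rmorphB rmorphN rmorph_nat -mulr_natr; ring.
Qed.

End CoefficientMatrix.

Theorem lemma5p1 (R : realType) (N : nat) (hN : (1 <= N)%N) (alpha : R)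
    (halpha : 0 < alpha) (a w : 'I_N -> R[i])
    (ha : forall k, a k != 0)
    (hw : forall k l, k != l -> complex.Re (w k) != complex.Re (w l))
    (theta : R) :
  \det (Bmat alpha a w theta) != 0.
Proof.
have two_pi_neq0 : - (2 * pi) != 0 :> R by rewrite oppr_eq0 gt_eqF // mulr_gt0 // pi_gt0.
rewrite Bmat_factor !det_mulmx !mulf_neq0 ?det_Amat_neq0 //.
  exact/det_Vandermonde_neq0/cexp_scale_w_inj.
by rewrite det_diag; apply/prodf_neq0 => k _; rewrite mxE cexp_neq0.
Qed.
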